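(* Let $M$ be a matroid on a finite set $E$ with $r(M)>0$. Then $F(M)$ is a partition of $\cup\mathcal{B}(M)$ if and only if $M$ is a unique expansion matroid.
   Context: A matroid $M=(E,\mathcal{I})$ has independent sets $\mathcal{I}(M)$; $\mathcal{B}(M)$ denotes its family of bases (maximal independent sets), $r(M)$ the common cardinality of its bases, and $r(X)$ the rank of $X\subseteq E$ (maximum size of an independent subset of $X$). For a set family $S$, $\cup S=\bigcup_{X\in S}X$. A partition of a set $U$ is a family of nonempty, pairwise disjoint subsets of $U$ whose union is $U$. For $r(M)>0$: the secondary base family is $s(M)=\{A\in\mathcal{I}(M): |A|=r(M)-1\}$; for $X\subseteq E$, $K_M(X)=\{a\in E: r(X\cup\{a\})=r(X)+1\}$; the forming base family is $F(M)=\{K_M(X): X\in s(M)\}$. $M$ is a unique expansion matroid if for every $B\in\mathcal{B}(M)$ and every $A\in s(M)$, whenever $e_1,e_2\in B$ satisfy $A\cup\{e_1\}\in\mathcal{B}(M)$ and $A\cup\{e_2\}\in\mathcal{B}(M)$, then $e_1=e_2$. *)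

From mathcomp Require Import all_boot.
Set Implicit Arguments. Unset Strict Implicit. Unset Printing Implicit Defensive.

Section Matroid.
Variable E : finType.
Implicit Types (I : {set {set E}}) (X A B : {set E}).

Definition is_matroid I : Prop :=
  [/\ set0 \in I,
      (forall A B, B \in I -> A \subset B -> A \in I) &
      (forall A B, A \in I -> B \in I -> #|A| < #|B| ->
         exists2 e, e \in B :\: A & e |: A \in I)].

Definition rk I X : nat := \max_(A in I | A \subset X) #|A|.

Definition rM I : nat := rk I setT.

Definition bases I : {set {set E}} := [set B | maxset (mem I) B].

Definition sec I : {set {set E}} := [set A in I | #|A| == (rM I).-1].

Definition KM I X : {set E} := [set a | rk I (a |: X) == (rk I X).+1].

Definition Fam I : {set {set E}} := [set KM I X | X in sec I].

Definition unique_expansion I : Prop :=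
  forall B A e1 e2, B \in bases I -> A \in sec I ->
    e1 \in B -> e2 \in B ->
    A :|: [set e1] \in bases I -> A :|: [set e2] \in bases I -> e1 = e2.

End Matroid.

(** For [X] in [s(M)], [a] lies in [K(X)] exactly when [X + a] is a basis.
    Hence every basis element [x] of [B] lies in [K(B - x)], and every [K(X)]
    is nonempty (augment [X] from a basis), so [F(M)] is a partition of
    [cup B(M)] iff its blocks are pairwise disjoint.  If they are, and
    [A + e1], [A + e2] are bases with [e1, e2] in a basis [B], then [e1] lies
    in both [K(A)] and [K(B - e1)], so [e2 in K(B - e1)], which is absurd.
    Conversely, under unique expansion two distinct elements [a, b] of one
    block [K(X)] are dependent (otherwise extend [{a, b}] to a basis inside
    [X + a]); so if [a in K(Y)] too, extending [{b}] to a basis inside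
    [Y + a + b] must avoid [a], which yields the basis [Y + b]. *)
From mathcomp Require Import all_boot zify.
Set Implicit Arguments. Unset Strict Implicit. Unset Printing Implicit Defensive.

Section Matroid.
Variable E : finType.
Variable I : {set {set E}}.
Hypothesis matroidI : is_matroid I.
Implicit Types (X Y A B S T : {set E}).

Lemma indep0 : set0 \in I.
Proof. by case: matroidI. Qed.

Lemma indep_subset A B : B \in I -> A \subset B -> A \in I.
Proof. by case: matroidI => _ sub _; apply: sub. Qed.

Lemma indep_augment A B : A \in I -> B \in I -> #|A| < #|B| ->
  exists2 e, e \in B :\: A & e |: A \in I.
Proof. by case: matroidI => _ _ aug; apply: aug. Qed.

Lemma leq_card_rk A X : A \in I -> A \subset X -> #|A| <= rk I X.
Proof. by move=> AI AX; apply: (leq_bigmax_cond A); rewrite AI AX. Qed.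

Lemma rk_witness X : exists2 A, (A \in I) && (A \subset X) & #|A| = rk I X.
Proof.
have indep0_sub : (set0 \in I) && (set0 \subset X) by rewrite indep0 sub0set.
rewrite /rk (@bigmax_eq_arg _ set0) //.
by case: arg_maxnP => // A AIX _; exists A.
Qed.

Lemma rk_le_card X : rk I X <= #|X|.
Proof.
by have [A /andP[_ AX] <-] := rk_witness X; apply: subset_leq_card.
Qed.

Lemma rk_indep X : X \in I -> rk I X = #|X|.
Proof. by move=> XI; apply/eqP; rewrite eqn_leq rk_le_card leq_card_rk. Qed.

Lemma leq_card_rM A : A \in I -> #|A| <= rM I.
Proof. by move=> AI; apply: leq_card_rk (subsetT A). Qed.

Lemma rM_witness : exists2 T, T \in I & #|T| = rM I.
Proof. by have [T /andP[TI _] cardT] := rk_witness setT; exists T. Qed.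

Lemma indep_extend S T : S \in I -> T \in I -> #|S| <= #|T| ->
  exists S', [/\ S \subset S', S' \subset S :|: T, S' \in I & #|S'| = #|T|].
Proof.
move=> SI TI /subnKC; move: (#|T| - #|S|) => n.
elim: n S SI => [|n IH] S SI cardST.
  by exists S; rewrite subxx subsetUl SI -cardST addn0.
have [|e /setDP[eT eS] eSI] := indep_augment SI TI; first by lia.
have [|S' [eSS' S'sub S'I cardS']] := IH _ eSI; first by rewrite cardsU1 eS; lia.
exists S'; split=> //; first exact: subset_trans (subsetUr [set e] S) eSS'.
apply: subset_trans S'sub _; rewrite -setUA subUset subxx andbT.
by rewrite sub1set inE eT orbT.
Qed.

Lemma basesE B : (B \in bases I) = (B \in I) && (#|B| == rM I).
Proof.
rewrite inE; apply/maxsetP/andP => [[BI maxB] | [BI /eqP cardB]].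
  split=> //; rewrite eqn_leq leq_card_rM //=; rewrite leqNgt; apply/negP => ltBr.
  have [T TI cardT] := rM_witness.
  have [|e /setDP[_ eB] eBI] := indep_augment BI TI; first by rewrite cardT.
  by move: eB; rewrite -(maxB _ eBI (subsetUr [set e] B)) setU11.
split=> // C CI BC; apply/eqP; rewrite eq_sym eqEcard BC.
by rewrite cardB leq_card_rM.
Qed.

Lemma secE X : (X \in sec I) = (X \in I) && (#|X| == (rM I).-1).
Proof. by rewrite inE. Qed.

Lemma KM_indep X a : X \in I -> (a \in KM I X) = (a \notin X) && (a |: X \in I).
Proof.
move=> XI; rewrite inE (rk_indep XI); apply/eqP/andP => [rkaX | [aX aXI]].
  have [A /andP[AI AaX] cardA] := rk_witness (a |: X).
  have card_aX : #|a |: X| <= #|X|.+1 by rewrite cardsU1; case: (a \in X).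
  have /eqP eqA : A == a |: X by rewrite eqEcard AaX cardA rkaX.
  move: cardA AI; rewrite rkaX eqA cardsU1 => cardaX ->; split=> //.
  by apply/negP => aX; rewrite aX /= in cardaX; lia.
by rewrite rk_indep // cardsU1 aX.
Qed.

Lemma setD1_bases_sec B x : B \in bases I -> x \in B -> B :\ x \in sec I.
Proof.
rewrite basesE secE => /andP[BI /eqP <-] xB.
by rewrite (indep_subset BI (subsetDl B _)) [#|B|](cardsD1 x B) xB eqxx.
Qed.

Hypothesis rM_gt0 : 0 < rM I.

Lemma bases_setU1 X a : X \in sec I -> (a |: X \in bases I) = (a \in KM I X).
Proof.
rewrite secE => /andP[XI /eqP cardX]; rewrite KM_indep // basesE cardsU1 cardX.
by case: (a \in X); rewrite /= ?andbF ?andbT //; apply/eqP; lia.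
Qed.

Lemma cover_Fam : cover (Fam I) = cover (bases I).
Proof.
apply/setP => x; apply/bigcupP/bigcupP => [[_ /imsetP[X secX ->] xK] | [B BB xB]].
  by exists (x |: X); rewrite ?setU11 ?bases_setU1.
have secBx := setD1_bases_sec BB xB.
by exists (KM I (B :\ x)); rewrite ?imset_f // -bases_setU1 // setD1K.
Qed.

Lemma set0_notin_Fam : set0 \notin Fam I.
Proof.
apply/imsetP => -[X secX KX0]; move: secX; rewrite secE => /andP[XI /eqP cardX].
have [T TI cardT] := rM_witness.
have [|e /setDP[_ eX] eXI] := indep_augment XI TI; first by rewrite cardX cardT; lia.
by have := KM_indep e XI; rewrite -KX0 inE eX eXI.
Qed.

Lemma partition_Fam_trivIset :
  partition (Fam I) (cover (bases I)) = trivIset (Fam I).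
Proof. by rewrite /partition cover_Fam eqxx set0_notin_Fam andbT. Qed.

Lemma trivIset_Fam_unique_expansion : trivIset (Fam I) -> unique_expansion I.
Proof.
move=> /trivIsetP disjF B A e1 e2 BB secA e1B e2B.
rewrite ![A :|: _]setUC !bases_setU1 // => e1K e2K.
have [//|ne12] := eqVneq e1 e2.
have secBe1 := setD1_bases_sec BB e1B.
have e1KB : e1 \in KM I (B :\ e1) by rewrite -bases_setU1 // setD1K.
have KBA : KM I (B :\ e1) = KM I A.
  apply/eqP; apply: contraT => neqK.
  have := disjF _ _ (imset_f _ secBe1) (imset_f _ secA) neqK.
  by move/disjoint_setI0/setP/(_ e1); rewrite inE e1KB e1K inE.
move: e2K; rewrite -KBA KM_indep; last by move: secBe1; rewrite secE => /andP[].
by rewrite !inE eq_sym ne12 e2B.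
Qed.

Section UniqueExpansion.
Hypothesis UE : unique_expansion I.

Lemma KM_pair_dependent X a b : X \in sec I -> a \in KM I X -> b \in KM I X ->
  a != b -> [set a; b] \notin I.
Proof.
move=> secX aK bK neab; apply/negP => abI.
have := aK; rewrite -bases_setU1 // basesE => /andP[aXI /eqP card_aX].
have [|S [abS _ SI cardS]] := indep_extend abI aXI; first by rewrite card_aX leq_card_rM.
have SB : S \in bases I by rewrite basesE SI cardS card_aX eqxx.
have /subsetP abS' := abS.
have ab : a = b.
  by apply: (UE SB secX (abS' _ (set21 a b)) (abS' _ (set22 a b)));
    rewrite setUC bases_setU1.
by rewrite ab eqxx in neab.
Qed.

Lemma KM_subset X Y a : X \in sec I -> Y \in sec I ->
  a \in KM I X -> a \in KM I Y -> KM I X \subset KM I Y.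
Proof.
move=> secX secY aKX aKY; apply/subsetP => b bKX.
have [-> //|neba] := eqVneq b a.
have ab_dep : [set a; b] \notin I by apply: KM_pair_dependent secX aKX bKX _; rewrite eq_sym.
have no_indep_ab C : C \in I -> a \in C -> b \in C -> False.
  move=> CI aC bC; move/negP: ab_dep; apply; apply: indep_subset CI _.
  by rewrite subUset !sub1set aC bC.
have := secY; rewrite secE => /andP[YI /eqP cardY].
have := aKY; rewrite -bases_setU1 // basesE => /andP[aYI /eqP card_aY].
have bY : b \notin Y.
  by apply/negP => bY; apply: (no_indep_ab _ aYI); rewrite !inE ?eqxx ?bY ?orbT.
have bI : [set b] \in I.
  have := bKX; rewrite -bases_setU1 // basesE => /andP[bXI _].
  by apply: indep_subset bXI _; rewrite sub1set setU11.
have [|S [bS Ssub SI cardS]] := indep_extend bI aYI; first by rewrite cards1 card_aY.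
have aS : a \notin S by apply/negP => aS; apply: (no_indep_ab _ SI aS); rewrite -sub1set.
have SbY : S \subset b |: Y.
  apply/subsetP => x xS; move/subsetP: Ssub => /(_ x xS).
  rewrite !inE => /or3P[-> // | /eqP xa | ->]; last by rewrite orbT.
  by rewrite -xa xS in aS.
have /eqP SE : S == b |: Y.
  by rewrite eqEcard SbY cardS card_aY cardsU1 bY cardY add1n prednK ?leqnn.
by rewrite KM_indep // bY -SE.
Qed.

Lemma unique_expansion_trivIset_Fam : trivIset (Fam I).
Proof.
apply/trivIsetP => _ _ /imsetP[X secX ->] /imsetP[Y secY ->] neqK.
rewrite -setI_eq0; apply: contraR neqK => /set0Pn[a /setIP[aX aY]].
by rewrite eqEsubset (KM_subset secX secY aX aY) (KM_subset secY secX aY aX).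
Qed.

End UniqueExpansion.
End Matroid.

Theorem theorem4 (E : finType) (I : {set {set E}}) :
  is_matroid I -> 0 < rM I ->
  (partition (Fam I) (cover (bases I)) <-> unique_expansion I).
Proof.
move=> matroidI rM_gt0; rewrite partition_Fam_trivIset //.
split; first exact: trivIset_Fam_unique_expansion.
exact: unique_expansion_trivIset_Fam.
Qed.
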